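(* Let $q, k \in \mathbb{N}$ with $1 < q < \frac{k}{4}$. Let $D_1, \dots, D_q \in \mathbb{N}$ satisfy $$D_q(k - 4q) > 1 + \xi q(q-1) + 5\binom{k-q}{2}, \qquad \text{where } \xi = \max_{1 \leq j < q}\{D_j - D_{j+1}\}.$$ If there exists an $(a_1, \dots, a_q)$-flip graph $F$ (with a witnessing colouring) such that $e_j^F[v] = D_j$ for every $v \in V(F)$ and every $1 \leq j \leq q$, then for every $N \in \mathbb{N}$ there exists an $(a_1, \dots, a_k)$-flip graph for some $a_{q+1}, \dots, a_k \in \mathbb{N}$ with $a_k > N$.
   Context: For a graph $G$ with an edge-colouring $f\colon E(G)\to\{1,\dots,k\}$ and $1\le j\le k$: $e^G_j[v]$ is the number of edges coloured $j$ in the subgraph of $G$ induced by the closed neighbourhood $N[v]$ of $v$, and $\deg_j(v)$ is the number of edges coloured $j$ incident to $v$. Given a strictly increasing sequence of positive integers $(a_1,\dots,a_k)$, a $d$-regular graph $G$ with $d=\sum_j a_j$ is an $(a_1,\dots,a_k)$-flip graph if there is an edge-colouring with colours $\{1,\dots,k\}$ such that $\deg_j(v)=a_j$ for all vertices $v$ and all $j$, and $e_k[v]<e_{k-1}[v]<\dots<e_1[v]$ for every vertex $v$. *)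

From mathcomp Require Import all_boot.
Set Implicit Arguments. Unset Strict Implicit. Unset Printing Implicit Defensive.

(* An edge-colouring is c : T -> T -> nat, required (on edges) to be
   symmetric with values in {1,...,k}.  Colours/indices are 1-based. *)

Definition simple_graph (T : finType) (e : rel T) : Prop :=
  symmetric e /\ irreflexive e.

Definition cnbhd (T : finType) (e : rel T) (v : T) : {set T} :=
  [set u | (u == v) || e v u].

Definition degj (T : finType) (e : rel T) (c : T -> T -> nat) (j : nat) (v : T) : nat :=
  #|[set u | e v u && (c v u == j)]|.

(* e_j[v]: number of edges coloured j in the subgraph induced by N[v];
   edges are counted as 2-element vertex sets {x,y}. *)
Definition ej (T : finType) (e : rel T) (c : T -> T -> nat) (j : nat) (v : T) : nat :=
  #|[set E : {set T} | (E \subset cnbhd e v) &&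
       [exists x, exists y, [&& E == [set x; y], e x y & c x y == j]]]|.

Definition flip_seq (k : nat) (a : nat -> nat) : Prop :=
  (forall j, 1 <= j <= k -> 0 < a j) /\ (forall j, 1 <= j < k -> a j < a j.+1).

Definition flip_colouring (T : finType) (e : rel T) (k : nat) (a : nat -> nat)
    (c : T -> T -> nat) : Prop :=
  [/\ forall x y, e x y -> c x y = c y x /\ 1 <= c x y <= k,
      forall v j, 1 <= j <= k -> degj e c j v = a j
    & forall v j, 1 <= j < k -> ej e c j.+1 v < ej e c j v].

Definition flip_graph_with (T : finType) (e : rel T) (k : nat) (a : nat -> nat)
    (c : T -> T -> nat) : Prop :=
  [/\ flip_seq k a, simple_graph e, 0 < #|T|,
      forall v, #|[set u | e v u]| = \sum_(1 <= j < k.+1) a j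
    & flip_colouring e k a c].

Definition flip_graph (T : finType) (e : rel T) (k : nat) (a : nat -> nat) : Prop :=
  exists c, flip_graph_with e k a c.

(* Let K = k - q and blow F up along the hypercube {0,1}^(K x B) for a large B:
   inside a fibre h keep F with its colours, and when h, h' differ in a single
   direction d join (x, h) to (y, h') for every y in N[x].  These cross edges get
   the new colours q + 1, ..., q + K, the layer of d depending on the colour of xy
   in F (0 when y = x).  The old colours keep degree a_j and get
   e_j = (KB + 1) D_j.  Colour q + 1 + i gets degree
   B (1 + d_F) - (K - 1 - 2i)(a_2 - a_1) and e_(q+1+i) = B P + (K - 1 - 2i)(2D_1 - 2D_2),
   where P counts the ordered pairs (x, y) of N[v] with x = y or x ~ y; as
   a_1 < a_2 and D_2 < D_1 these increase resp. decrease with i.  For B large the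
   new degrees exceed a_q and N, and the hypothesis on D_q gives P < K D_q, hence
   e_(q+1) < (KB + 1) D_q. *)

From mathcomp Require Import all_boot zify.
Set Implicit Arguments. Unset Strict Implicit. Unset Printing Implicit Defensive.

Lemma card_set_sum (T : finType) (P : pred T) : #|[set x | P x]| = \sum_x (P x : nat).
Proof.
rewrite -sum1dep_card big_mkcond /=; apply: eq_bigr => x _.
by case: (P x).
Qed.

Lemma sum_nat_eq_indicator m n x : \sum_(m <= j < n) ((x == j) : nat) = (m <= x < n).
Proof.
elim: n => [|n IH]; first by rewrite big_geq // ltn0 andbF.
case: (leqP m n) => [mn|nm]; last by rewrite big_geq; lia.
rewrite big_nat_recr //= IH.
case: (ltngtP x n) => [xn|nx|->]; rewrite ?ltnS ?leqnn ?mn ?andbT //= addn0.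
  by rewrite (ltnW xn) andbT.
by rewrite andbF (leqNgt x n) nx andbF.
Qed.

Lemma sum_by_colour (I : finType) (P : pred I) (col : I -> nat) n :
  (forall i, P i -> 1 <= col i <= n) ->
  \sum_i (P i : nat) = \sum_(1 <= j < n.+1) \sum_i ((P i && (col i == j)) : nat).
Proof.
move=> col_range; rewrite exchange_big /=; apply: eq_bigr => i _.
case Pi: (P i) => /=; last by rewrite big1.
by rewrite sum_nat_eq_indicator; have := col_range i Pi; lia.
Qed.

Lemma sum_pairE (I J : finType) (G : I * J -> nat) :
  \sum_(p : I * J) G p = \sum_(i : I) \sum_(j : J) G (i, j).
Proof. by rewrite pair_bigA; apply: eq_bigr => [[i j]]. Qed.

Lemma sum_pair_pairE (T C : finType) (G : (T * C) * (T * C) -> nat) :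
  \sum_p G p = \sum_(h1 : C) \sum_(h2 : C) \sum_(p : T * T) G ((p.1, h1), (p.2, h2)).
Proof.
rewrite sum_pairE (eq_bigr _ (fun u _ => sum_pairE _)) sum_pairE exchange_big /=.
apply: eq_bigr => h1 _; under eq_bigr => x1 _ do rewrite exchange_big.
by rewrite exchange_big; apply: eq_bigr => h2 _; rewrite sum_pairE.
Qed.

Lemma set2_eq (T : finType) (a b x y : T) : a != b ->
  [set a; b] = [set x; y] -> (a == x) && (b == y) || (a == y) && (b == x).
Proof.
move=> ab Eab.
have /set2P aE : a \in [set x; y] by rewrite -Eab set21.
have /set2P bE : b \in [set x; y] by rewrite -Eab set22.
by case: aE bE ab => -> [] ->; rewrite ?eqxx ?orbT.
Qed.

Lemma sum_nat_ge n m : \sum_(0 <= b < n) (m <= b : nat) = n - m.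
Proof. by elim: n => [|n IH]; [rewrite big_geq | rewrite big_nat_recr //= IH; lia]. Qed.

Lemma sum_nat_lt n m : \sum_(0 <= b < n) (b < m : nat) = minn m n.
Proof. by elim: n => [|n IH]; [rewrite big_geq //; lia | rewrite big_nat_recr //= IH; lia]. Qed.

Lemma sum_nat_eq n m : \sum_(0 <= b < n) (b == m : nat) = (m < n).
Proof.
by rewrite (eq_bigr (fun b => (m == b : nat))) ?sum_nat_eq_indicator // => b _; rewrite eq_sym.
Qed.

Lemma sum_nat_eq_mul n m (F : nat -> nat) : m < n -> \sum_(0 <= a < n) (a == m) * F a = F m.
Proof.
move=> mn; rewrite (eq_bigr (fun a => (a == m : nat) * F m)); last first.
  by move=> a _; case: eqVneq => [->|].
by rewrite -big_distrl /= sum_nat_eq mn mul1n.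
Qed.

Section ClosedNeighbourhoodPairs.
Variables (T : finType) (e : rel T) (c : T -> T -> nat).
Hypotheses (e_sym : symmetric e) (e_irr : irreflexive e)
  (c_sym : forall x y, e x y -> c x y = c y x).

Definition ej_pairs (j : nat) (v : T) : nat :=
  \sum_(p : T * T) ((p.1 \in cnbhd e v) && (p.2 \in cnbhd e v)
                     && e p.1 p.2 && (c p.1 p.2 == j) : nat).

Lemma ej_pairsE j v : ej_pairs j v = 2 * ej e c j v.
Proof.
set S := cnbhd e v.
pose P := [set p : T * T | (p.1 \in S) && (p.2 \in S) && e p.1 p.2 && (c p.1 p.2 == j)].
pose edge (p : T * T) := [set p.1; p.2].
have edgesE : [set E : {set T} | (E \subset S) &&
    [exists x, exists y, [&& E == [set x; y], e x y & c x y == j]]] = edge @: P.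
  apply/setP => E; rewrite !inE; apply/idP/imsetP.
  - case/andP=> sub /existsP [x /existsP [y /and3P [/eqP Exy exy cxy]]]; subst E.
    exists (x, y) => //; rewrite /P inE /= exy cxy !andbT.
    by rewrite !(subsetP sub) ?set21 ?set22.
  - case=> [[x y]]; rewrite /P inE /= => /andP [/andP [/andP [xS yS] exy] cxy] ->.
    apply/andP; split; first by apply/subsetP => z; rewrite in_set2 => /orP [] /eqP ->.
    by apply/existsP; exists x; apply/existsP; exists y; rewrite eqxx exy cxy.
rewrite /ej_pairs -(card_set_sum (fun p : T * T =>
  (p.1 \in S) && (p.2 \in S) && e p.1 p.2 && (c p.1 p.2 == j))) -/P.
rewrite /ej edgesE -sum1_card (partition_big_imset edge) /= -sum1_card big_distrr /=.
apply: eq_bigr => _ /imsetP [[x y] Pxy ->].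
move: (Pxy); rewrite /P inE /= => /andP [/andP [/andP [xS yS] exy] cxy].
have xy : x != y by apply: contraTneq exy => ->; rewrite e_irr.
rewrite (eq_bigl (mem [set (x, y); (y, x)])); last first.
  move=> [u w]; rewrite !inE /=; apply/idP/idP.
  - case/andP=> /andP [/andP [/andP [_ _] euw] _] /eqP Euw.
    have uw : u != w by apply: contraTneq euw => ->; rewrite e_irr.
    by case/orP: (set2_eq uw Euw) => /andP [/eqP -> /eqP ->]; rewrite eqxx ?orbT.
  - move: xS yS; rewrite !inE => xS yS.
    case/orP => /eqP [-> ->]; rewrite xS yS /= ?exy ?cxy ?eqxx //.
    by rewrite e_sym exy -c_sym // cxy /edge /= setUC eqxx.
by rewrite sum1_card cards2 muln1 (_ : (x, y) != (y, x)) //; apply: contra xy => /eqP [->].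
Qed.

Lemma degj_le_ej j v : degj e c j v <= ej e c j v.
Proof.
rewrite -(leq_pmul2l (isT : 0 < 2)) -ej_pairsE mul2n -addnn.
have star_at (y : T) : \sum_x ((x == v) && e v y && (c v y == j) : nat) = (e v y && (c v y == j)).
  by rewrite (bigD1 v) //= eqxx big1 ?addn0 // => x /negbTE ->.
have star1 : \sum_(p : T * T) ((p.1 == v) && e v p.2 && (c v p.2 == j) : nat) = degj e c j v.
  rewrite -(pair_bigA _ (fun x y => ((x == v) && e v y && (c v y == j) : nat))) exchange_big.
  by rewrite /degj card_set_sum; apply: eq_bigr => y _; rewrite star_at.
have star2 : \sum_(p : T * T) ((p.2 == v) && e v p.1 && (c v p.1 == j) : nat) = degj e c j v.
  rewrite -(pair_bigA _ (fun x y => ((y == v) && e v x && (c v x == j) : nat))).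
  by rewrite /degj card_set_sum; apply: eq_bigr => x _; rewrite star_at.
rewrite -{1}star1 -star2 -big_split /=; apply: leq_sum => [[x y]] _ /=.
rewrite /cnbhd !inE.
case: (eqVneq x v) => [->|xv]; case: (eqVneq y v) => [->|yv] //=; rewrite ?e_irr //=.
- by case: (e v y) => //=; case: (c v y == j).
- by case exv: (e v x) => //=; rewrite (e_sym x v) exv (c_sym exv); rewrite ?andbT.
Qed.

End ClosedNeighbourhoodPairs.

Section Hypercube.
Variable I : finType.
Local Notation cube := {ffun I -> bool}.

Definition flip (h : cube) (d : I) : cube := [ffun d' => (d' == d) (+) h d'].

Definition cube_adj (h h' : cube) : bool := [exists d, h' == flip h d].

Lemma flipK (h : cube) (d : I) : flip (flip h d) d = h.
Proof. by apply/ffunP => x; rewrite !ffunE; case: (x == d); case: (h x). Qed.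

Lemma flip_neq (h : cube) (d : I) : flip h d != h.
Proof. by apply/eqP => /ffunP /(_ d); rewrite ffunE eqxx; case: (h d). Qed.

Lemma flip_inj (h : cube) : injective (flip h).
Proof.
move=> d d' /ffunP /(_ d); rewrite !ffunE eqxx.
by case: eqVneq => // _; case: (h d).
Qed.

Lemma pick_flip (h : cube) (d : I) : [pick d' | h d' != flip h d d'] = Some d.
Proof.
case: pickP => [d' | /(_ d)]; last by rewrite ffunE eqxx; case: (h d).
by rewrite ffunE; case: (eqVneq d' d) => [-> | _] //; case: (h d').
Qed.

Lemma cube_adj_irr : irreflexive cube_adj.
Proof. by move=> h; apply/existsP => [[d /eqP E]]; move: (flip_neq h d); rewrite -E eqxx. Qed.

Lemma cube_adj_sym : symmetric cube_adj.
Proof.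
by move=> h h'; apply/existsP/existsP => [[d /eqP ->] | [d /eqP ->]]; exists d; rewrite flipK.
Qed.

Lemma cube_adj_flip (h : cube) (d : I) : cube_adj h (flip h d).
Proof. by apply/existsP; exists d. Qed.

Lemma cube_adj_flip2 (h : cube) (d d' : I) : cube_adj (flip h d) (flip h d') = false.
Proof.
apply/existsP => [[d'' /eqP /ffunP E]].
move: (E d) (E d') (E d''); rewrite !ffunE !eqxx.
case: (eqVneq d d') => [<- | ndd']; case: (eqVneq d d'') => [<- | ndd''];
  rewrite ?eqxx /=; try by case: (h d).
- by move=> _; case: (h d'').
- by rewrite [d' == d]eq_sym (negbTE ndd'); case: (h d').
Qed.

Lemma sum_cube_cnbhd (h : cube) (F : cube -> nat) :
  \sum_(h' : cube) (h' \in cnbhd cube_adj h) * F h' = F h + \sum_(d : I) F (flip h d).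
Proof.
rewrite (eq_bigr (fun h' => if h' \in h |: [set flip h d | d : I] then F h' else 0)); last first.
  move=> h' _; rewrite !inE (_ : cube_adj h h' = (h' \in [set flip h d | d in I])).
    by case: (_ || _); rewrite ?mul1n ?mul0n.
  by apply/existsP/imsetP => [[d /eqP ->] | [d _ ->]]; exists d.
rewrite -big_mkcond big_setU1 /=; last first.
  by apply/imsetP => [[d _ /eqP]]; rewrite eq_sym (negbTE (flip_neq h d)).
by rewrite big_imset //= => d d' _ _; apply: flip_inj.
Qed.

End Hypercube.

Arguments cube_adj {I}.

Section Blowup.
Variables (T : finType) (e : rel T) (c : T -> T -> nat) (q : nat).
Variables (I : finType) (col : nat -> I -> nat).
Hypotheses (e_sym : symmetric e) (e_irr : irreflexive e)
  (c_sym : forall x y, e x y -> c x y = c y x).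
Local Notation cube := {ffun I -> bool}.

Definition colour0 (x y : T) : nat := if x == y then 0 else c x y.

Definition blowup_adj (u w : T * cube) : bool :=
  ((u.2 == w.2) && e u.1 w.1) || (cube_adj u.2 w.2 && ((u.1 == w.1) || e u.1 w.1)).

(* For adjacent fibres [pick] finds the unique direction in which they differ;
   the last branch only concerns non-edges. *)
Definition blowup_col (u w : T * cube) : nat :=
  if u.2 == w.2 then c u.1 w.1
  else if [pick d | u.2 d != w.2 d] is Some d then q.+1 + col (colour0 u.1 w.1) d else 0.

Lemma blowup_adj_sym : symmetric blowup_adj.
Proof. by move=> [x h] [y h']; rewrite /blowup_adj /= cube_adj_sym e_sym (eq_sym h) (eq_sym x). Qed.

Lemma blowup_adj_irr : irreflexive blowup_adj.
Proof. by move=> [x h]; rewrite /blowup_adj /= e_irr cube_adj_irr andbF. Qed.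

Lemma blowup_col_sym u w : blowup_adj u w -> blowup_col u w = blowup_col w u.
Proof.
case: u w => [x h] [y h']; rewrite /blowup_adj /blowup_col /= (eq_sym h').
rewrite (@eq_pick _ _ (fun d => h' d != h d)) => [|d]; last by rewrite /= eq_sym.
case: eqVneq => [-> | _] /=; first by rewrite cube_adj_irr orbF; apply: c_sym.
case/andP=> _ exy; case: pickP => // d _; congr (_ + col _ d).
by move: exy; rewrite /colour0 eq_sym; case: eqVneq => //= _; apply: c_sym.
Qed.

Lemma blowup_adj_fibre x y (h : cube) : blowup_adj (x, h) (y, h) = e x y.
Proof. by rewrite /blowup_adj /= eqxx cube_adj_irr orbF. Qed.

Lemma blowup_col_fibre x y (h : cube) : blowup_col (x, h) (y, h) = c x y.
Proof. by rewrite /blowup_col /= eqxx. Qed.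

Lemma blowup_adj_flip x y (h : cube) d :
  blowup_adj (x, h) (y, flip h d) = (x == y) || e x y.
Proof. by rewrite /blowup_adj /= eq_sym (negbTE (flip_neq h d)) cube_adj_flip. Qed.

Lemma blowup_col_flip x y (h : cube) d :
  blowup_col (x, h) (y, flip h d) = q.+1 + col (colour0 x y) d.
Proof. by rewrite /blowup_col /= eq_sym (negbTE (flip_neq h d)) pick_flip. Qed.

Lemma blowup_adj_far x y (h h' : cube) :
  h' \notin cnbhd cube_adj h -> blowup_adj (x, h) (y, h') = false.
Proof.
rewrite !inE negb_or => /andP [nh na].
by rewrite /blowup_adj /= eq_sym (negbTE nh) (negbTE na).
Qed.

Lemma cnbhd_blowup (u v : T * cube) :
  (u \in cnbhd blowup_adj v) = (u.1 \in cnbhd e v.1) && (u.2 \in cnbhd cube_adj v.2).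
Proof.
case: u v => [x h'] [f h]; rewrite !inE /blowup_adj /= -pair_eqE /=.
case: (eqVneq h' h) => [-> | nh] /=; first by rewrite cube_adj_irr !andbT orbF.
by rewrite andbF /= (eq_sym f) andbC.
Qed.

Lemma blowup_col_range K u w :
  (forall x y, e x y -> 1 <= c x y <= q) -> (forall t d, col t d < K) ->
  blowup_adj u w -> 1 <= blowup_col u w <= q + K.
Proof.
move=> c_range col_lt; case: u w => [x h] [y h']; rewrite /blowup_adj /blowup_col /=.
case: eqVneq => [-> | _] /=; first by rewrite cube_adj_irr /= orbF => /c_range; lia.
case/andP => /existsP [d /eqP ->] _; rewrite pick_flip.
by have := col_lt (colour0 x y) d; lia.
Qed.

Lemma degj_blowup j f (h : cube) :
  degj blowup_adj blowup_col j (f, h) = degj e c j f +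
    \sum_(d : I) \sum_(x : T) ((x \in cnbhd e f) && (q.+1 + col (colour0 f x) d == j) : nat).
Proof.
rewrite /degj !card_set_sum sum_pairE exchange_big /=.
rewrite (eq_bigr (fun h' => (h' \in cnbhd cube_adj h) * \sum_x
    (blowup_adj (f, h) (x, h') && (blowup_col (f, h) (x, h') == j) : nat))); last first.
  move=> h' _; case: (boolP (h' \in cnbhd cube_adj h)) => [_ | far]; first by rewrite mul1n.
  by rewrite mul0n big1 // => x _; rewrite blowup_adj_far.
rewrite sum_cube_cnbhd; congr (_ + _).
  by apply: eq_bigr => x _; rewrite blowup_adj_fibre blowup_col_fibre.
apply: eq_bigr => d _; apply: eq_bigr => x _.
by rewrite blowup_adj_flip blowup_col_flip !inE (eq_sym x).
Qed.

Definition fibre_pairs j f (h1 h2 : cube) : nat :=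
  \sum_(p : T * T) ((p.1 \in cnbhd e f) && (p.2 \in cnbhd e f)
     && blowup_adj (p.1, h1) (p.2, h2) && (blowup_col (p.1, h1) (p.2, h2) == j) : nat).

Definition cross_pairs j f (d : I) : nat :=
  \sum_(p : T * T) ((p.1 \in cnbhd e f) && (p.2 \in cnbhd e f)
     && ((p.1 == p.2) || e p.1 p.2) && (q.+1 + col (colour0 p.1 p.2) d == j) : nat).

Lemma fibre_pairs_same j f h : fibre_pairs j f h h = ej_pairs e c j f.
Proof. by apply: eq_bigr => p _; rewrite blowup_adj_fibre blowup_col_fibre. Qed.

Lemma fibre_pairs_flip j f h d : fibre_pairs j f h (flip h d) = cross_pairs j f d.
Proof. by apply: eq_bigr => p _; rewrite blowup_adj_flip blowup_col_flip. Qed.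

Lemma fibre_pairs_flipC j f h d : fibre_pairs j f (flip h d) h = cross_pairs j f d.
Proof. by rewrite -{2}[h](flipK h d) fibre_pairs_flip. Qed.

Lemma fibre_pairs_flip2 j f h d :
  \sum_(d' : I) fibre_pairs j f (flip h d) (flip h d') = ej_pairs e c j f.
Proof.
rewrite (bigD1 d) //= fibre_pairs_same big1 ?addn0 // => d' nd.
apply: big1 => p _; rewrite blowup_adj_far ?andbF // !inE cube_adj_flip2 orbF.
by apply: contra nd => /eqP /flip_inj ->.
Qed.

Lemma ej_blowup j f (h : cube) :
  ej blowup_adj blowup_col j (f, h) = #|I|.+1 * ej e c j f + \sum_(d : I) cross_pairs j f d.
Proof.
apply/eqP; rewrite -(eqn_pmul2l (isT : 0 < 2)) mulnDr mulnCA -!ej_pairsE //;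
  last exact: blowup_col_sym; last exact: blowup_adj_irr; last exact: blowup_adj_sym.
rewrite /ej_pairs sum_pair_pairE -/(ej_pairs e c j f).
rewrite (eq_bigr (fun h1 => (h1 \in cnbhd cube_adj h) *
    \sum_(h2 : cube) (h2 \in cnbhd cube_adj h) * fibre_pairs j f h1 h2)); last first.
  move=> h1 _; rewrite big_distrr /=; apply: eq_bigr => h2 _.
  rewrite /fibre_pairs mulnA big_distrr /=; apply: eq_bigr => p _ /=.
  rewrite !cnbhd_blowup /=.
  by case: (h1 \in _); case: (h2 \in _); rewrite ?andbF ?andbT //= ?mul1n ?mul0n.
rewrite sum_cube_cnbhd sum_cube_cnbhd fibre_pairs_same.
rewrite (eq_bigr _ (fun d _ => fibre_pairs_flip j f h d)).
have flip_row d : \sum_(h2 : cube) (h2 \in cnbhd cube_adj h) * fibre_pairs j f (flip h d) h2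
    = cross_pairs j f d + ej_pairs e c j f.
  by rewrite sum_cube_cnbhd fibre_pairs_flipC fibre_pairs_flip2.
rewrite (eq_bigr _ (fun d _ => flip_row d)).
rewrite big_split /= (_ : \sum_(d : I) ej_pairs e c j f = #|I| * ej_pairs e c j f);
  last exact: sum_nat_const.
by rewrite mulSn mul2n -addnn [_ + #|I| * _]addnC addnACA.
Qed.

End Blowup.

Section Layers.
Variables K B : nat.
Hypothesis K_leB : K <= B.

Definition layer_nat (t a b : nat) : nat :=
  if t == 1 then minn a b else if t == 2 then maxn a (K.-1 - b) else a.

Definition layer (t : nat) (d : 'I_K * 'I_B) : nat := layer_nat t d.1 d.2.

Lemma layer_lt t d : layer t d < K.
Proof.
rewrite /layer /layer_nat; have := ltn_ord d.1.
by case: (t == 1); case: (t == 2); lia.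
Qed.

(* Pairs of colour 1 lose two directions per layer and pairs of colour 2 gain
   two, while all other pairs are spread evenly; as a_1 < a_2 and D_2 < D_1,
   this makes the new degrees increase and the new e_j decrease. *)
Lemma card_layer t cc : cc < K ->
  \sum_(d : 'I_K * 'I_B) (layer t d == cc : nat) + (t == 1) * (2 * cc) + (t == 2) * K.-1
  = B + (t == 1) * K.-1 + (t == 2) * (2 * cc).
Proof.
move=> cK.
have -> : \sum_(d : 'I_K * 'I_B) (layer t d == cc : nat) =
    \sum_(0 <= a < K) \sum_(0 <= b < B) (layer_nat t a b == cc : nat).
  rewrite sum_pairE big_mkord; apply: eq_bigr => a _.
  by rewrite big_mkord; apply: eq_bigr.
rewrite /layer_nat; case: (eqVneq t 1) => [t1 | t1] /=.
  subst t; rewrite mul0n addn0 mul1n.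
  rewrite (eq_bigr (fun a => (a == cc) * (B - cc) + (cc < a) * 1)); last first.
    move=> a _; rewrite (eq_bigr (fun b => (a == cc) * (cc <= b) + (cc < a) * (b == cc))).
      by rewrite big_split /= -!big_distrr /= sum_nat_ge sum_nat_eq; lia.
    by move=> b _; lia.
  rewrite big_split /= sum_nat_eq_mul // -big_distrl /=.
  by rewrite (eq_bigr (fun a => (cc.+1 <= a : nat))) // sum_nat_ge; lia.
case: (eqVneq t 2) => [t2 | t2] /=.
  subst t; rewrite mul0n addn0 mul1n.
  rewrite (eq_bigr (fun a => (a == cc) * (B - (K.-1 - cc)) + (a < cc) * 1)); last first.
    move=> a _; rewrite (eq_bigr (fun b =>
      (a == cc) * (K.-1 - cc <= b) + (a < cc) * (b == K.-1 - cc))).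
      by rewrite big_split /= -!big_distrr /= sum_nat_ge sum_nat_eq; lia.
    by move=> b _; lia.
  by rewrite big_split /= sum_nat_eq_mul // -big_distrl /= sum_nat_lt; lia.
rewrite !mul0n !addn0 (eq_bigr (fun a => (a == cc) * B)) ?sum_nat_eq_mul // => a _.
by rewrite (eq_bigr (fun b => (a == cc : nat))) // sum_nat_const_nat; lia.
Qed.

Lemma sum_card_layer (J : finType) (P : pred J) (t : J -> nat) cc : cc < K ->
  \sum_i (P i : nat) * \sum_(d : 'I_K * 'I_B) (layer (t i) d == cc : nat)
    + 2 * cc * \sum_i (P i && (t i == 1) : nat) + K.-1 * \sum_i (P i && (t i == 2) : nat)
  = B * \sum_i (P i : nat) + K.-1 * \sum_i (P i && (t i == 1) : nat)
    + 2 * cc * \sum_i (P i && (t i == 2) : nat).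
Proof.
move=> cK; rewrite !big_distrr -!big_split; apply: eq_bigr => i _ /=.
have := card_layer (t i) cK.
by case: (P i); case: (t i == 1); case: (t i == 2); rewrite /= ?mul1n ?mul0n ?muln1 ?muln0; lia.
Qed.

End Layers.

Lemma sum_le_mul_last (a : nat -> nat) q :
  (forall j, 1 <= j < q -> a j <= a j.+1) -> \sum_(1 <= j < q.+1) a j <= q * a q.
Proof.
elim: q => [|q IH] a_incr; first by rewrite big_geq.
have IHq : \sum_(1 <= j < q.+1) a j <= q * a q by apply: IH => j jq; apply: a_incr; lia.
rewrite big_nat_recr //= mulSnr leq_add2r (leq_trans IHq) // leq_mul2l.
by case: q {IH IHq} a_incr => //= q a_incr; apply: a_incr; rewrite ltnSn.
Qed.

Lemma sum_le_gap (D : nat -> nat) xi q :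
  (forall j, 1 <= j < q -> D j <= D j.+1 + xi) ->
  2 * \sum_(1 <= j < q.+1) D j <= 2 * q * D q + xi * q * (q - 1).
Proof.
elim: q => [|q IH] D_gap; first by rewrite big_geq.
have IHq := IH (fun j jq => D_gap j ltac:(lia)).
rewrite big_nat_recr //= mulnDr.
case: q IH IHq D_gap => [|q] _ IHq D_gap; first by rewrite big_geq //; lia.
have := leq_mul (leqnn q.+1) (D_gap q.+1 ltac:(lia)); nia.
Qed.

Definition nbhd_pairs (q : nat) (a D : nat -> nat) : nat :=
  1 + \sum_(1 <= j < q.+1) a j + \sum_(1 <= j < q.+1) 2 * D j.

Lemma nbhd_pairs_lt q k (a D : nat -> nat) :
  1 < q -> 4 * q < k ->
  1 + (\max_(1 <= j < q) (D j - D j.+1)) * q * (q - 1) + 5 * 'C(k - q, 2)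
    < D q * (k - 4 * q) ->
  (forall j, 1 <= j < q -> a j < a j.+1) -> a q <= D q ->
  nbhd_pairs q a D < (k - q) * D q.
Proof.
move=> q_gt1 qk hyp a_incr aqDq.
set xi := \max_(1 <= j < q) (D j - D j.+1) in hyp.
have D_gap j : 1 <= j < q -> D j <= D j.+1 + xi.
  move=> jq; rewrite -leq_subLR.
  by apply: (@leq_bigmax_seq _ (index_iota 1 q) xpredT); rewrite ?mem_index_iota.
have sum_a := sum_le_mul_last (fun j jq => ltnW (a_incr j jq)).
have sum_D := sum_le_gap D_gap.
have -> : (k - q) * D q = D q * (k - 4 * q) + 3 * (q * D q).
  have -> : k - q = (k - 4 * q) + 3 * q by lia.
  by rewrite mulnDl mulnC mulnA.
rewrite /nbhd_pairs -big_distrr /=.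
have := leq_mul (leqnn q) aqDq; nia.
Qed.

Lemma affine_step (X0 X1 R m p p' cc : nat) :
  X0 + 2 * cc * p + m = R + 2 * cc * p' -> X1 + 2 * cc.+1 * p + m = R + 2 * cc.+1 * p' ->
  X1 + 2 * p = X0 + 2 * p'.
Proof. by rewrite mulnSr !mulnDl; lia. Qed.

Section Construction.
Variables (T : finType) (e : rel T) (c : T -> T -> nat) (q : nat) (a D : nat -> nat).
Hypotheses (e_sym : symmetric e) (e_irr : irreflexive e)
  (c_sym : forall x y, e x y -> c x y = c y x)
  (c_range : forall x y, e x y -> 1 <= c x y <= q)
  (degj_F : forall v j, 1 <= j <= q -> degj e c j v = a j)
  (ej_F : forall v j, 1 <= j <= q -> ej e c j v = D j)
  (deg_F : forall v, #|[set u | e v u]| = \sum_(1 <= j < q.+1) a j)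
  (q_gt1 : 1 < q).
Variables (K B : nat).
Hypotheses (K_gt0 : 0 < K) (K_leB : K <= B).

Local Notation cube := {ffun 'I_K * 'I_B -> bool}.
Local Notation adjG := (@blowup_adj T e ('I_K * 'I_B)%type).
Local Notation colG := (blowup_col c q (@layer K B)).

Lemma degj_F_high v j : q < j -> degj e c j v = 0.
Proof.
move=> qj; rewrite /degj card_set_sum big1 // => x _.
by case exv: (e v x) => //=; have := c_range exv; case: eqVneq => // ->; lia.
Qed.

Lemma ej_F_high v j : q < j -> ej e c j v = 0.
Proof.
move=> qj; apply/eqP; rewrite -(eqn_pmul2l (isT : 0 < 2)) -ej_pairsE //; apply/eqP.
apply: big1 => p _; case exy: (e p.1 p.2); rewrite ?andbF //=.
by have := c_range exy; case: (c _ _ =P j) => [->|]; [lia | rewrite andbF].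
Qed.

Lemma card_cnbhd v : \sum_x (x \in cnbhd e v : nat) = 1 + \sum_(1 <= j < q.+1) a j.
Proof.
rewrite -card_set_sum -(deg_F v) (_ : [set x | x \in cnbhd e v] = v |: [set u | e v u]).
  by rewrite cardsU1 inE e_irr.
by apply/setP => x; rewrite !inE.
Qed.

Lemma sum_cnbhd_colour0 v t : 1 <= t ->
  \sum_x ((x \in cnbhd e v) && (colour0 c v x == t) : nat) = degj e c t v.
Proof.
move=> t1; rewrite /degj card_set_sum; apply: eq_bigr => x _.
rewrite !inE /colour0 eq_sym; case: eqVneq => [-> | _] /=; first by rewrite e_irr; lia.
by rewrite andbC.
Qed.

Lemma sum_pairs_colour0 v t : 1 <= t ->
  \sum_(p : T * T) ((p.1 \in cnbhd e v) && (p.2 \in cnbhd e v)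
      && ((p.1 == p.2) || e p.1 p.2) && (colour0 c p.1 p.2 == t) : nat) = ej_pairs e c t v.
Proof.
move=> t1; apply: eq_bigr => p _; rewrite /colour0.
by case: eqVneq => [-> | _] //=; rewrite e_irr !andbF; lia.
Qed.

Lemma card_pairs v :
  \sum_(p : T * T) ((p.1 \in cnbhd e v) && (p.2 \in cnbhd e v)
      && ((p.1 == p.2) || e p.1 p.2) : nat) = nbhd_pairs q a D.
Proof.
rewrite (eq_bigr (fun p : T * T =>
   ((p.1 \in cnbhd e v) && (p.2 \in cnbhd e v) && (p.1 == p.2) : nat)
   + ((p.1 \in cnbhd e v) && (p.2 \in cnbhd e v) && e p.1 p.2 : nat))); last first.
  by move=> [x y] _ /=; case: eqVneq => [-> | _] /=; rewrite ?e_irr ?andbF //; lia.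
rewrite big_split /= [X in _ + X](sum_by_colour (col := fun p : T * T => c p.1 p.2) (n := q));
  last by move=> p /andP [_ /c_range].
rewrite (eq_big_nat _ _ (F2 := fun j => 2 * D j)) => [|j jq]; last first.
  by rewrite -(ej_F v jq) -ej_pairsE.
rewrite /nbhd_pairs -(card_cnbhd v) sum_pairE; congr (_ + _).
apply: eq_bigr => x _ /=; rewrite (bigD1 x) //= eqxx andbT andbb big1 ?addn0 // => y.
by rewrite eq_sym => /negbTE ->; rewrite andbF.
Qed.

Lemma degj_blowup_low f (h : cube) j : 1 <= j <= q -> degj adjG colG j (f, h) = a j.
Proof.
move=> jq; rewrite degj_blowup degj_F // big1 ?addn0 // => d _.
by apply: big1 => x _; case: eqVneq => //; lia.
Qed.

Lemma ej_blowup_low f (h : cube) j : 1 <= j <= q -> ej adjG colG j (f, h) = (K * B).+1 * D j.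
Proof.
move=> jq; rewrite ej_blowup // ej_F // big1 ?addn0 ?card_prod ?card_ord // => d _.
by apply: big1 => p _; case: eqVneq; rewrite ?andbF //; lia.
Qed.

Lemma degj_blowup_high f (h : cube) cc : cc < K ->
  degj adjG colG (q.+1 + cc) (f, h) + 2 * cc * a 1 + K.-1 * a 2
  = B * (1 + \sum_(1 <= j < q.+1) a j) + K.-1 * a 1 + 2 * cc * a 2.
Proof.
move=> cK; rewrite degj_blowup degj_F_high ?add0n; last by lia.
rewrite exchange_big /=.
have layer_sum x : \sum_(d : 'I_K * 'I_B)
    ((x \in cnbhd e f) && (q.+1 + @layer K B (colour0 c f x) d == q.+1 + cc) : nat)
    = (x \in cnbhd e f) * \sum_(d : 'I_K * 'I_B) (@layer K B (colour0 c f x) d == cc : nat).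
  rewrite big_distrr; apply: eq_bigr => d _.
  by rewrite eqn_add2l /=; case: (_ \in _); case: (_ == _).
rewrite (eq_bigr _ (fun x _ => layer_sum x)).
rewrite -(card_cnbhd f) -(degj_F f (j := 1)) -?(degj_F f (j := 2)); try lia.
rewrite -?sum_cnbhd_colour0 //.
exact: (sum_card_layer K_leB _ (colour0 c f) cK).
Qed.

Lemma ej_blowup_high f (h : cube) cc : cc < K ->
  ej adjG colG (q.+1 + cc) (f, h) + 2 * cc * (2 * D 1) + K.-1 * (2 * D 2)
  = B * nbhd_pairs q a D + K.-1 * (2 * D 1) + 2 * cc * (2 * D 2).
Proof.
move=> cK; rewrite ej_blowup // ej_F_high ?muln0 ?add0n; last by lia.
rewrite /cross_pairs exchange_big /=.
set P := fun p : T * T => (p.1 \in cnbhd e f) && (p.2 \in cnbhd e f) && ((p.1 == p.2) || e p.1 p.2).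
have layer_sum p : \sum_(d : 'I_K * 'I_B)
    (P p && (q.+1 + @layer K B (colour0 c p.1 p.2) d == q.+1 + cc) : nat)
    = P p * \sum_(d : 'I_K * 'I_B) (@layer K B (colour0 c p.1 p.2) d == cc : nat).
  by rewrite big_distrr; apply: eq_bigr => d _; rewrite eqn_add2l /=; case: (P p); case: (_ == _).
rewrite (eq_bigr _ (fun p _ => layer_sum p)).
rewrite -(card_pairs f) -(ej_F f (j := 1)) -?(ej_F f (j := 2)); try lia.
rewrite -!ej_pairsE // -?sum_pairs_colour0 //.
exact: (sum_card_layer K_leB P (fun p => colour0 c p.1 p.2) cK).
Qed.

Lemma degj_blowup_step u cc : cc.+1 < K ->
  degj adjG colG (q.+1 + cc.+1) u + 2 * a 1 = degj adjG colG (q.+1 + cc) u + 2 * a 2.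
Proof.
case: u => f h cK.
exact: affine_step (degj_blowup_high f h (ltnW cK)) (degj_blowup_high f h cK).
Qed.

Lemma ej_blowup_step u cc : cc.+1 < K ->
  ej adjG colG (q.+1 + cc.+1) u + 2 * (2 * D 1) = ej adjG colG (q.+1 + cc) u + 2 * (2 * D 2).
Proof.
case: u => f h cK.
exact: affine_step (ej_blowup_high f h (ltnW cK)) (ej_blowup_high f h cK).
Qed.

Lemma degj_blowup_uniform u w j : 1 <= j <= q + K ->
  degj adjG colG j u = degj adjG colG j w.
Proof.
case: u w => [f h] [f' h'] jk; case: (leqP j q) => jq.
  by rewrite !degj_blowup_low //; lia.
have -> : j = q.+1 + (j - q.+1) by lia.
have cK : j - q.+1 < K by lia.
apply/eqP; rewrite -(eqn_add2r (2 * (j - q.+1) * a 1 + K.-1 * a 2)) !addnA.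
by rewrite !degj_blowup_high.
Qed.

Lemma degj_blowup_first_ge u : B - K.-1 * a 2 <= degj adjG colG q.+1 u.
Proof.
case: u => f h; have := degj_blowup_high f h K_gt0.
rewrite addn0 muln0 !mul0n !addn0 leq_subLR addnC => ->.
by apply: leq_trans (leq_addr _ _); apply: leq_pmulr.
Qed.

Lemma degj_blowup_high_ge u cc : a 1 <= a 2 -> cc < K ->
  degj adjG colG q.+1 u <= degj adjG colG (q.+1 + cc) u.
Proof.
move=> a12; elim: cc => [|cc IH] cK; first by rewrite addn0.
apply: (leq_trans (IH (ltnW cK))); rewrite -(leq_add2r (2 * a 1)) degj_blowup_step //.
by rewrite leq_add2l leq_mul2l a12 orbT.
Qed.

Lemma ej_blowup_first_le u :
  ej adjG colG q.+1 u <= B * nbhd_pairs q a D + K.-1 * (2 * D 1).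
Proof.
case: u => f h; have := ej_blowup_high f h K_gt0.
by rewrite addn0 muln0 !mul0n !addn0 => <-; apply: leq_addr.
Qed.

Lemma blowup_flip_seq (u0 : T * cube) :
  flip_seq q a -> a q < degj adjG colG q.+1 u0 ->
  flip_seq (q + K) (fun j => degj adjG colG j u0).
Proof.
case: u0 => f0 h0 [a_pos a_incr] aq_lt.
have a12 : a 1 < a 2 by apply: a_incr; lia.
have high j : q < j <= q + K -> j = q.+1 + (j - q.+1) /\ j - q.+1 < K by lia.
split => j jr; case: (leqP j q) => jq.
- by rewrite degj_blowup_low ?a_pos //; lia.
- have [jE cK] := high j ltac:(lia); rewrite jE.
  apply: leq_trans (degj_blowup_high_ge _ (ltnW a12) cK).
  exact: leq_ltn_trans (leq0n _) aq_lt.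
- case: (ltnP j q) => jq'; first by rewrite !degj_blowup_low ?a_incr //; lia.
  have -> : j = q by lia.
  by rewrite (degj_blowup_low _ _ (j := q)) //; lia.
- have [jE cK] := high j ltac:(lia); rewrite jE -addnS.
  by rewrite -(ltn_add2r (2 * a 1)) degj_blowup_step ?ltn_add2l ?ltn_pmul2l //; lia.
Qed.

Lemma blowup_ej_decr u j : (forall j, 1 <= j < q -> D j.+1 < D j) ->
  ej adjG colG q.+1 u < (K * B).+1 * D q -> 1 <= j < q + K ->
  ej adjG colG j.+1 u < ej adjG colG j u.
Proof.
case: u => f h D_decr ej_first_lt jr; case: (ltnP j q) => jq.
  by rewrite !ej_blowup_low ?ltn_pmul2l //; try lia; apply: D_decr; lia.
case: (eqVneq j q) => [-> | jq'].
  by rewrite (ej_blowup_low f h (j := q)) //; lia.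
have D21 : D 2 < D 1 by apply: D_decr; lia.
have jE : j = q.+1 + (j - q.+1) by lia.
rewrite jE -addnS -(ltn_add2r (2 * (2 * D 1))) ej_blowup_step; last by lia.
by rewrite ltn_add2l !ltn_pmul2l.
Qed.

Lemma blowup_flip_graph (u0 : T * cube) :
  flip_seq q a -> (forall j, 1 <= j < q -> D j.+1 < D j) ->
  a q < degj adjG colG q.+1 u0 ->
  (forall u, ej adjG colG q.+1 u < (K * B).+1 * D q) ->
  flip_graph_with adjG (q + K) (fun j => degj adjG colG j u0) colG.
Proof.
move=> a_flip D_decr aq_lt ej_first_lt.
have col_range u w : adjG u w -> 1 <= colG u w <= q + K.
  by apply: blowup_col_range => // t d; apply: layer_lt.
have degj_u0 u j : 1 <= j <= q + K -> degj adjG colG j u = degj adjG colG j u0.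
  exact: degj_blowup_uniform.
split; first exact: blowup_flip_seq.
- by split; [apply: blowup_adj_sym | apply: blowup_adj_irr].
- by apply/card_gt0P; exists u0.
- move=> u; rewrite card_set_sum (sum_by_colour (col := colG u) (n := q + K)) => [|w];
    last exact: col_range.
  by apply: eq_big_nat => j jr; rewrite -(degj_u0 u) // /degj card_set_sum.
split=> [u w uw | u j jr | u j jr]; last exact: blowup_ej_decr.
- by split; [exact: (blowup_col_sym _ _ c_sym uw) | exact: col_range].
- exact: degj_u0.
Qed.

Lemma blowup_flip_graph_large (f0 : T) N :
  flip_seq q a -> (forall j, 1 <= j < q -> D j.+1 < D j) ->
  nbhd_pairs q a D < K * D q ->
  maxn (a q) N + K.-1 * a 2 < B -> K.-1 * (2 * D 1) < B ->
  exists2 a' : nat -> nat, (forall j, 1 <= j <= q -> a' j = a j) /\ N < a' (q + K)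
    & flip_graph_with adjG (q + K) a' colG.
Proof.
move=> a_flip D_decr pairs_lt B_deg B_ej.
have a12 : a 1 <= a 2 by case: a_flip => _ a_incr; apply/ltnW/a_incr; lia.
pose u0 : T * cube := (f0, [ffun=> false]).
have deg_first := degj_blowup_first_ge u0.
exists (fun j => degj adjG colG j u0); last apply: blowup_flip_graph => //.
- split=> [j jq | ]; first exact: degj_blowup_low.
  have K1 : K.-1 < K by rewrite ltn_predL.
  have := degj_blowup_high_ge u0 a12 K1; rewrite addSnnS prednK //; lia.
- by apply: leq_trans deg_first; lia.
move=> u; apply: leq_ltn_trans (ej_blowup_first_le u) _.
have : B * nbhd_pairs q a D + B <= B * (K * D q) by rewrite -mulnSr leq_mul2l pairs_lt orbT.
nia.
Qed.

End Construction.

Theorem lemma4p4 (q k : nat) (a D : nat -> nat) :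
  1 < q -> 4 * q < k ->
  1 + (\max_(1 <= j < q) (D j - D j.+1)) * q * (q - 1) + 5 * 'C(k - q, 2)
    < D q * (k - 4 * q) ->
  (exists (T : finType) (e : rel T) (c : T -> T -> nat),
      flip_graph_with e q a c /\
      (forall v j, 1 <= j <= q -> ej e c j v = D j)) ->
  forall N : nat,
    exists a' : nat -> nat,
      [/\ forall j, 1 <= j <= q -> a' j = a j,
          N < a' k
        & exists (T : finType) (e : rel T), flip_graph e k a'].
Proof.
move=> q_gt1 qk hyp [T [e [c [[a_flip [e_sym e_irr] T_gt0 deg_F [c_ok degj_F ej_flip]] ej_F]]]] N.
have c_sym x y : e x y -> c x y = c y x by case/c_ok.
have c_range x y : e x y -> 1 <= c x y <= q by case/c_ok.
have [f0 _] := card_gt0P T_gt0.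
have D_decr j : 1 <= j < q -> D j.+1 < D j.
  by move=> jq; rewrite -(ej_F f0 j) -?(ej_F f0 j.+1) ?ej_flip //; lia.
have q_range : 1 <= q <= q by lia.
have aq_le_Dq : a q <= D q by rewrite -(degj_F f0 _ q_range) -(ej_F f0 _ q_range) degj_le_ej.
have pairs_lt := nbhd_pairs_lt q_gt1 qk hyp (proj2 a_flip) aq_le_Dq.
have qK : q + (k - q) = k by lia.
pose B := (k - q + a q + N + (k - q) * (a 2 + 2 * D 1)).+1.
have K_gt0 : 0 < k - q by lia.
have [K_leB B_deg B_ej] : [/\ k - q <= B, maxn (a q) N + (k - q).-1 * a 2 < B
    & (k - q).-1 * (2 * D 1) < B] by rewrite /B; split; nia.
have [a' [a'_low a'_big] flipG] := blowup_flip_graph_large e_sym e_irr c_sym c_range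
  degj_F ej_F deg_F q_gt1 K_gt0 K_leB f0 a_flip D_decr pairs_lt B_deg B_ej.
exists a'; rewrite -qK; split => //.
by do 2 eexists; exact: (ex_intro _ _ flipG).
Qed.
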